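(* Let $\Omega\subset\mathbb{P}(\mathbb{R}^d)$ be a properly convex domain and let $g_n\in\mathrm{SL}^{\pm}(d,\mathbb{R})$ be a sequence with $g_n\Omega=\Omega$ for all $n$ and $\mu_{1,2}(g_n)\to\infty$. Then for every $x\in\Omega$, the set of accumulation points in $\mathbb{P}(\mathbb{R}^d)$ of the sequence $g_nx$ equals the set of accumulation points of the sequence $E_1^+(g_n)$.
   Context: A properly convex domain is the projectivization of an open convex cone whose closure lies in an affine chart. For $g\in\mathrm{GL}(d,\mathbb{R})$, $\sigma_1(g)\ge\dots\ge\sigma_d(g)$ are the eigenvalues of $\sqrt{gg^T}$ and $\mu_{1,2}(g)=\log\sigma_1(g)-\log\sigma_2(g)$. If $\sigma_1(g)>\sigma_2(g)$, $E_1^+(g)\in\mathbb{P}(\mathbb{R}^d)$ is the line spanned by the longest axis of the ellipsoid $\{gv:\|v\|=1\}$ (defined for all large $n$ here). *)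

From HB Require Import structures.
From mathcomp Require Import all_boot all_order all_algebra.
From mathcomp Require Import boolp classical_sets reals exp.
Set Implicit Arguments. Unset Strict Implicit. Unset Printing Implicit Defensive.
Import Order.TTheory GRing.Theory Num.Theory.
Local Open Scope ring_scope.
Local Open Scope classical_set_scope.

Section Defs.
Variables (R : realType) (d : nat).
Local Notation vec := 'cV[R]_d.

Definition enorm (v : vec) : R := Num.sqrt (\sum_i (v i 0) ^+ 2).

(* Metric on P(R^d) = lines of nonzero vectors:
   min ( |u/|u| - v/|v|| , |u/|u| + v/|v|| ). *)
Definition pdist (u v : vec) : R :=
  Num.min (enorm ((enorm u)^-1 *: u - (enorm v)^-1 *: v))
          (enorm ((enorm u)^-1 *: u + (enorm v)^-1 *: v)).

Definition proj_accum (v : nat -> vec) (u : vec) : Prop :=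
  u != 0 /\ forall eps : R, 0 < eps -> forall N : nat,
    exists n : nat, (N <= n)%N /\ pdist (v n) u < eps.

Definition open_set (C : set vec) : Prop :=
  forall v, C v -> exists eps : R, 0 < eps /\
    forall w, enorm (w - v) < eps -> C w.
Definition closure_set (C : set vec) : set vec :=
  fun v => forall eps : R, 0 < eps -> exists w, C w /\ enorm (w - v) < eps.
Definition convex_set (C : set vec) : Prop :=
  forall u w (t : R), C u -> C w -> 0 <= t -> t <= 1 -> C (t *: u + (1 - t) *: w).
Definition cone_set (C : set vec) : Prop :=
  forall v (t : R), C v -> 0 < t -> C (t *: v).

(* Omega = P(C) is properly convex: C is a nonempty open convex cone in
   R^d \ {0} whose closure (in P(R^d)) lies in an affine chart
   P(R^d) \ P(ker a) for some nonzero linear functional a. *)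
Definition properly_convex_cone (C : set vec) : Prop :=
  [/\ (exists v, C v) /\ ~ C 0, open_set C, convex_set C, cone_set C &
      (exists a : 'rV[R]_d, forall v, closure_set C v -> v != 0 ->
        (a *m v) 0 0 != 0)].

Definition in_proj (C : set vec) (v : vec) : Prop :=
  exists t : R, t != 0 /\ C (t *: v).

Definition preserves (C : set vec) (g : 'M[R]_d) : Prop :=
  forall v : vec, v != 0 -> (in_proj C (g *m v) <-> in_proj C v).

Definition in_SLpm (g : 'M[R]_d) : Prop := `|\det g| = 1.

Definition sorted_eigs_ggT (g : 'M[R]_d) (s : seq R) : Prop :=
  sorted (fun x y => y <= x) s /\
  char_poly (g *m g^T) = \prod_(x <- s) ('X - x%:P).

Definition eigs_ggT (g : 'M[R]_d) : seq R := xget [::] (sorted_eigs_ggT g).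

(* sigma_i(g), i >= 1, = sqrt of the i-th eigenvalue of g g^T *)
Definition sing_val (g : 'M[R]_d) (i : nat) : R :=
  Num.sqrt (nth 0 (eigs_ggT g) i.-1).

Definition mu12 (g : 'M[R]_d) : R := ln (sing_val g 1) - ln (sing_val g 2).

Definition longest_axis (g : 'M[R]_d) (w : vec) : Prop :=
  exists v : vec, enorm v = 1 /\ w = g *m v /\
    forall u : vec, enorm u = 1 -> enorm (g *m u) <= enorm (g *m v).

End Defs.

From HB Require Import structures.
From mathcomp Require Import all_boot all_order all_algebra interval_inference.
From mathcomp Require Import boolp classical_sets reals exp.
From mathcomp Require Import topology normedtype matrix_normedtype.
From mathcomp Require Import ring lra.
Import Order.TTheory GRing.Theory Num.Theory.
Import numFieldTopology.Exports numFieldNormedType.Exports.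
Local Open Scope ring_scope.
Set Implicit Arguments. Unset Strict Implicit. Unset Printing Implicit Defensive.

(* Write x = p v + x' with v a unit vector on which g is longest and x' orthogonal
   to v.  For u orthogonal to v, |g u|^2 <= (d - 1) sigma_2(g)^2 |u|^2 (Bessel's
   inequality for the rows of g), so a large mu_{1,2}(g) makes g contract v^perp
   relative to v, and [g x] is close to [g v] = E_1^+(g) as soon as |p| is bounded
   below.  This lower bound is where proper convexity enters.  By compactness, a
   properly convex cone contains no pair of vectors uniformly close to u and to - u
   for a unit vector u.  But if |p| were small compared with the radius r of a ball
   around x inside the cone, then x + (r/2) v and x - (r/2) v would lie in the
   cone, and g, which preserves the cone up to a common sign, would map them to
   vectors of the cone close to the directions of g v and - g v.  Hence
   pdist (g_n x) E_1^+(g_n) tends to 0, and both sequences have the same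
   accumulation points. *)

Section Euclid.
Variables (R : realType) (d : nat).
Local Notation vec := 'cV[R]_d.
Implicit Types a b c u v w : vec.

Definition dot u v : R := \sum_i u i 0 * v i 0.

Lemma dotC u v : dot u v = dot v u.
Proof. by apply: eq_bigr => i _; rewrite mulrC. Qed.

Lemma dotDl u v w : dot (u + v) w = dot u w + dot v w.
Proof. by rewrite /dot -big_split; apply: eq_bigr => i _; rewrite mxE mulrDl. Qed.

Lemma dotZl (a : R) u w : dot (a *: u) w = a * dot u w.
Proof. by rewrite /dot mulr_sumr; apply: eq_bigr => i _; rewrite mxE mulrA. Qed.

Lemma dotNl u w : dot (- u) w = - dot u w.
Proof. by rewrite -scaleN1r dotZl mulN1r. Qed.

Lemma dotBl u v w : dot (u - v) w = dot u w - dot v w.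
Proof. by rewrite dotDl dotNl. Qed.

Lemma dotDr u v w : dot w (u + v) = dot w u + dot w v.
Proof. by rewrite !(dotC w) dotDl. Qed.

Lemma dotZr (a : R) u w : dot w (a *: u) = a * dot w u.
Proof. by rewrite !(dotC w) dotZl. Qed.

Lemma dotNr u w : dot w (- u) = - dot w u.
Proof. by rewrite !(dotC w) dotNl. Qed.

Lemma dotBr u v w : dot w (u - v) = dot w u - dot w v.
Proof. by rewrite !(dotC w) dotBl. Qed.

Lemma dot0l u : dot 0 u = 0.
Proof. by rewrite /dot big1 // => i _; rewrite mxE mul0r. Qed.

Lemma dot0r u : dot u 0 = 0.
Proof. by rewrite dotC dot0l. Qed.

Lemma dotvv_ge0 u : 0 <= dot u u.
Proof. by apply: sumr_ge0 => i _; rewrite -expr2 sqr_ge0. Qed.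

Lemma dotvv_eq0 u : dot u u = 0 -> u = 0.
Proof.
move=> h; apply/matrixP => i j; rewrite mxE (ord1 j).
have h2 : \sum_k (u k 0) ^+ 2 = 0.
  by rewrite -[RHS]h /dot; apply: eq_bigr => k _; rewrite expr2.
have := psumr_eq0P (P := xpredT) (fun k _ => sqr_ge0 (u k 0)) h2 (i := i) isT.
by move/eqP; rewrite sqrf_eq0 => /eqP.
Qed.

Lemma dot_sqr_le u v : dot u v ^+ 2 <= dot u u * dot v v.
Proof.
have [->|vn0] := eqVneq v 0; first by rewrite dot0r dot0l expr0n /= mulr0.
have hv : 0 < dot v v.
  rewrite lt_neqAle dotvv_ge0 andbT; apply/eqP => /esym /dotvv_eq0 h.
  by rewrite h eqxx in vn0.
set t := dot u v / dot v v.
have e : t * dot v v = dot u v by rewrite /t mulfVK // gt_eqF.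
have := dotvv_ge0 (u - t *: v).
rewrite !(dotBl, dotBr, dotZl, dotZr) (dotC v u) => h.
have h' : 0 <= dot u u - t * dot u v by move: h; rewrite -mulrA e; lra.
have : 0 <= (dot u u - t * dot u v) * dot v v by apply: mulr_ge0 => //; exact: ltW.
rewrite mulrBl -mulrA (mulrC (dot u v)) mulrA e; lra.
Qed.

Lemma enormE u : enorm u = Num.sqrt (dot u u).
Proof. by rewrite /enorm /dot; congr Num.sqrt; under eq_bigr do rewrite expr2. Qed.

Lemma enorm_ge0 u : 0 <= enorm u.
Proof. by rewrite enormE sqrtr_ge0. Qed.

Lemma enorm_sqr u : enorm u ^+ 2 = dot u u.
Proof. by rewrite enormE sqr_sqrtr // dotvv_ge0. Qed.

Lemma enorm_eq0 u : enorm u = 0 -> u = 0.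
Proof. by move=> h; apply: dotvv_eq0; rewrite -enorm_sqr h expr0n. Qed.

Lemma enorm0 : enorm (0 : vec) = 0.
Proof. by rewrite enormE dot0l sqrtr0. Qed.

Lemma enorm_gt0 u : u != 0 -> 0 < enorm u.
Proof.
move=> h; rewrite lt_neqAle enorm_ge0 andbT; apply/eqP => /esym /enorm_eq0 h0.
by rewrite h0 eqxx in h.
Qed.

Lemma enorm1_neq0 u : enorm u = 1 -> u != 0.
Proof.
by move=> u1; apply/eqP => u0; move: u1; rewrite u0 enorm0 => /eqP; rewrite eq_sym oner_eq0.
Qed.

Lemma enormZ (a : R) u : enorm (a *: u) = `|a| * enorm u.
Proof. by rewrite !enormE dotZl dotZr mulrA -expr2 sqrtrM ?sqr_ge0 // sqrtr_sqr. Qed.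

Lemma enormN u : enorm (- u) = enorm u.
Proof. by rewrite -scaleN1r enormZ normrN normr1 mul1r. Qed.

Lemma enormBC u v : enorm (u - v) = enorm (v - u).
Proof. by rewrite -enormN opprB. Qed.

Lemma cauchy_schwarz u v : `|dot u v| <= enorm u * enorm v.
Proof.
rewrite !enormE -sqrtrM ?dotvv_ge0 // -sqrtr_sqr ler_sqrt ?dot_sqr_le //.
by apply: mulr_ge0; apply: dotvv_ge0.
Qed.

Lemma ler_enormD u v : enorm (u + v) <= enorm u + enorm v.
Proof.
rewrite -ler_sqr ?nnegrE ?addr_ge0 ?enorm_ge0 //.
rewrite enorm_sqr dotDl !dotDr (dotC v u) sqrrD !enorm_sqr.
have := cauchy_schwarz u v; have := ler_norm (dot u v); lra.
Qed.

Lemma ler_enormB u v : enorm (u - v) <= enorm u + enorm v.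
Proof. by rewrite -(enormN v) ler_enormD. Qed.

Lemma ler_enorm_dist_dist u v : `|enorm u - enorm v| <= enorm (u - v).
Proof.
have := ler_enormD (u - v) v; have := ler_enormD (v - u) u.
rewrite !subrK enormBC ler_norml; lra.
Qed.

Lemma ler_coord_enorm u i : `|u i 0| <= enorm u.
Proof.
rewrite enormE -sqrtr_sqr ler_sqrt ?dotvv_ge0 // /dot (bigD1 i) //=.
by rewrite -expr2 lerDl; apply: sumr_ge0 => k _; rewrite -expr2 sqr_ge0.
Qed.

Lemma ler_enorm_sum_coord u : enorm u <= \sum_i `|u i 0|.
Proof.
rewrite enormE -[X in _ <= X]ger0_norm ?sumr_ge0 // -sqrtr_sqr ler_sqrt ?sqr_ge0 //.
rewrite expr2 mulr_suml /dot; apply: ler_sum => i _.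
apply: le_trans (ler_norm _) _; rewrite normrM ler_wpM2l ?normr_ge0 //.
by rewrite (bigD1 i) //= lerDl; apply: sumr_ge0.
Qed.

Definition normalize u : vec := (enorm u)^-1 *: u.

Lemma enorm_normalize u : u != 0 -> enorm (normalize u) = 1.
Proof.
move=> h; rewrite /normalize enormZ ger0_norm ?invr_ge0 ?enorm_ge0 // mulVf //.
by rewrite gt_eqF // enorm_gt0.
Qed.

Lemma normalizeZ (a : R) u : a != 0 ->
  normalize (a *: u) = (a / `|a|) *: normalize u.
Proof.
have [->|un0 an0] := eqVneq u 0; first by rewrite scaler0 /normalize !scaler0.
rewrite /normalize enormZ !scalerA; congr (_ *: _).
by field; rewrite normr_eq0 an0 gt_eqF // enorm_gt0.
Qed.

Lemma enorm_normalizeB a b : b != 0 ->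
  enorm (normalize a - normalize b) <= 2 * enorm (a - b) / enorm b.
Proof.
move=> bn0; have hb := enorm_gt0 bn0.
have hbi : 0 <= (enorm b)^-1 by rewrite invr_ge0 ltW.
have -> : normalize a - normalize b =
    ((enorm a)^-1 - (enorm b)^-1) *: a + (enorm b)^-1 *: (a - b).
  by rewrite /normalize scalerBl scalerBr addrA subrK.
apply: le_trans (ler_enormD _ _) _; rewrite !enormZ (ger0_norm hbi).
have [->|an0] := eqVneq a 0.
  rewrite enorm0 mulr0 add0r.
  have := mulr_ge0 hbi (enorm_ge0 (0 - b)); rewrite -mulrA (mulrC (enorm _)); lra.
have ha := enorm_gt0 an0.
(* the first term is ||b| - |a|| / |b| <= |a - b| / |b| *)
have -> : `|(enorm a)^-1 - (enorm b)^-1| * enorm a = `|enorm b - enorm a| / enorm b.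
  have e : ((enorm a)^-1 - (enorm b)^-1) * enorm a = (enorm b - enorm a) / enorm b.
    by field; rewrite !gt_eqF.
  by rewrite -[X in _ * X](ger0_norm (ltW ha)) -normrM e normrM (ger0_norm hbi).
have h1 := ler_enorm_dist_dist b a; rewrite enormBC in h1.
have h2 : 0 <= (enorm (a - b) - `|enorm b - enorm a|) * (enorm b)^-1.
  by apply: mulr_ge0 => //; lra.
have h3 := mulr_ge0 hbi (enorm_ge0 (a - b)).
nra.
Qed.

Lemma pdist_le_normalizeB a b : pdist a b <= enorm (normalize a - normalize b).
Proof. by rewrite /pdist ge_min lexx. Qed.

Lemma pdist_le_normalizeD a b : pdist a b <= enorm (normalize a + normalize b).
Proof. by rewrite /pdist ge_min lexx orbT. Qed.

Lemma pdistC a b : pdist a b = pdist b a.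
Proof. by rewrite /pdist enormBC (addrC ((enorm b)^-1 *: b) ((enorm a)^-1 *: a)). Qed.

Lemma pdist_cases a b : pdist a b = enorm (normalize a - normalize b) \/
  pdist a b = enorm (normalize a + normalize b).
Proof. by rewrite /pdist /Num.min; case: ifP => _; [left|right]. Qed.

Lemma pdist_triangle a b c : pdist a c <= pdist a b + pdist b c.
Proof.
set A := normalize a; set B := normalize b; set C := normalize c.
case: (pdist_cases a b) => ->; case: (pdist_cases b c) => ->.
- apply: le_trans (pdist_le_normalizeB _ _) _.
  by rewrite -/A -/C -(subrKA B) ler_enormD.
- apply: le_trans (pdist_le_normalizeD _ _) _.
  have -> : A + C = (A - B) + (B + C) by rewrite addrA subrK.
  exact: ler_enormD.
- apply: le_trans (pdist_le_normalizeD _ _) _.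
  have -> : A + C = (A + B) - (B - C) by rewrite opprB addrA addrAC addrK.
  exact: ler_enormB.
- apply: le_trans (pdist_le_normalizeB _ _) _.
  have -> : A - C = (A + B) - (B + C) by rewrite opprD addrA addrK.
  exact: ler_enormB.
Qed.

End Euclid.

Section SingularValues.
Variables (R : realType) (d : nat).
Local Notation vec := 'cV[R]_d.
Implicit Types u v : vec.

Lemma dot_mx u v : u^T *m v = (dot u v)%:M.
Proof.
apply/matrixP => i j; rewrite (ord1 i) (ord1 j) !mxE /= mulr1n.
by apply: eq_bigr => k _; rewrite mxE.
Qed.

Lemma dot_mulmx (g : 'M[R]_d) u v : dot (g *m u) v = dot u (g^T *m v).
Proof.
have dotE (a b : vec) : dot a b = (a^T *m b) 0 0 by rewrite dot_mx mxE mulr1n.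
by rewrite !dotE trmx_mul -mulmxA.
Qed.

Lemma in_SLpm_unitmx (g : 'M[R]_d) : in_SLpm g -> g \in unitmx.
Proof.
by rewrite /in_SLpm unitmxE unitfE -normr_eq0 => ->; apply: oner_neq0.
Qed.

Lemma mulmx_unit_neq0 (g : 'M[R]_d) (v : vec) : g \in unitmx -> v != 0 -> g *m v != 0.
Proof. by move=> gU; apply: contraNneq => gv0; rewrite -(mulKmx gU v) gv0 mulmx0. Qed.

Lemma mxtrace_mulmx_tr_ge0 (A : 'M[R]_d) : 0 <= \tr (A *m A^T).
Proof.
apply: sumr_ge0 => i _; rewrite mxE; apply: sumr_ge0 => j _.
by rewrite mxE -expr2 sqr_ge0.
Qed.

Lemma mxtrace_mulmx_trV u : \tr (u *m u^T) = dot u u.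
Proof. by rewrite mxtrace_mulC dot_mx /mxtrace big_ord1 mxE mulr1n. Qed.

(* Bessel's inequality for the rows of g: complete {u, v} to an orthonormal basis
   and use that the trace of (g Q)(g Q)^T is nonnegative, Q the projection onto
   the orthogonal complement of {u, v}. *)
Lemma orthonormal_pair_le_mxtrace (g : 'M[R]_d) u v :
  dot v v = 1 -> dot u u = 1 -> dot u v = 0 ->
  dot (g *m v) (g *m v) + dot (g *m u) (g *m u) <= \tr (g *m g^T).
Proof.
move=> hv hu huv.
set P := v *m v^T + u *m u^T; set Q := 1%:M - P.
have PT : P^T = P by rewrite /P linearD /= !trmx_mul !trmxK.
have QT : Q^T = Q by rewrite /Q linearB /= PT trmx1.
have PP : P *m P = P.
  rewrite /P mulmxDl !mulmxDr !mulmxA -!(mulmxA v) -!(mulmxA u) !dot_mx.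
  by rewrite (dotC v u) hv hu huv !mul_scalar_mx !scale1r !scale0r !mulmx0 addr0 add0r.
have QQ : Q *m Q^T = Q by rewrite QT /Q mulmxBl mul1mx mulmxBr mulmx1 PP subrr subr0.
have := mxtrace_mulmx_tr_ge0 (g *m Q).
rewrite trmx_mul QT -mulmxA (mulmxA Q) -{2}QT QQ.
have -> : \tr (g *m (Q *m g^T)) =
    \tr (g *m g^T) - (dot (g *m v) (g *m v) + dot (g *m u) (g *m u)).
  rewrite /Q mulmxBl mul1mx mulmxBr linearB /=; congr (_ - _).
  rewrite /P !mulmxDl !mulmxDr linearD /= -!mxtrace_mulmx_trV.
  by rewrite !trmx_mul !mulmxA.
lra.
Qed.

Lemma ler_sqr_sqrtr (x : R) : x <= Num.sqrt x ^+ 2.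
Proof.
have [x_ge0|x_lt0] := leP 0 x; first by rewrite sqr_sqrtr.
exact: le_trans (ltW x_lt0) (sqr_ge0 _).
Qed.

(* [eigs_ggT] is a choice: when no sorted list of eigenvalues is found, it
   defaults to [::] and every singular value is 0. *)
Lemma eigs_ggTP (g : 'M[R]_d) : sorted_eigs_ggT g (eigs_ggT g) \/ eigs_ggT g = [::].
Proof. by rewrite /eigs_ggT; case: xgetP => *; [left|right]. Qed.

Lemma sing_val21_le (g : 'M[R]_d) : sing_val g 2 <= sing_val g 1.
Proof.
rewrite /sing_val /=; case: (eigs_ggTP g) => [[hs _]|->] /=; last by rewrite sqrtr0.
move: hs; case: (eigs_ggT g) => [|a [|b s]] /=; rewrite ?sqrtr0 ?sqrtr_ge0 //.
by case/andP => hba _; apply: ler_wsqrtr.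
Qed.

Lemma mu12_neq0_eigs_ggT (g : 'M[R]_d) :
  mu12 g != 0 -> sorted_eigs_ggT g (eigs_ggT g).
Proof.
case: (eigs_ggTP g) => // heigs.
by rewrite /mu12 /sing_val heigs /= sqrtr0 subrr eqxx.
Qed.

Lemma mu12_gap (g : 'M[R]_d) (K : R) :
  1 <= K -> ln K < mu12 g -> K * sing_val g 2 <= sing_val g 1.
Proof.
move=> hK hmu.
have s2_ge0 : 0 <= sing_val g 2 by apply: sqrtr_ge0.
have [s2_0|s2_neq0] := eqVneq (sing_val g 2) 0.
  by rewrite s2_0 mulr0 sqrtr_ge0.
have s2_pos : 0 < sing_val g 2 by rewrite lt_neqAle eq_sym s2_neq0.
have s1_pos : 0 < sing_val g 1 := lt_le_trans s2_pos (sing_val21_le g).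
have K_pos : 0 < K by lra.
apply: ltW; rewrite -ltr_ln ?posrE ?mulr_gt0 // lnM ?posrE //.
by rewrite /mu12 in hmu; lra.
Qed.

Lemma sorted_eigs_ggT_trace (g : 'M[R]_d) s : (0 < d)%N -> sorted_eigs_ggT g s ->
  size s = d /\ \tr (g *m g^T) = \sum_(x <- s) x.
Proof.
move=> hd [_ he].
have sz : size s = d.
  by have := size_char_poly (g *m g^T); rewrite he size_prod_XsubC => -[].
split => //; have := char_poly_trace (g *m g^T) hd.
have -> : d.-1 = (size s).-1 by rewrite sz.
rewrite he coefPn_prod_XsubC; first by move/oppr_inj.
by rewrite sz -lt0n.
Qed.

Section LongestAxis.
Variables (g : 'M[R]_d) (v : vec).
Hypothesis v_unit : enorm v = 1.
Hypothesis v_longest : forall u, enorm u = 1 -> enorm (g *m u) <= enorm (g *m v).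

Lemma enorm_mulmx_le u : enorm (g *m u) <= enorm (g *m v) * enorm u.
Proof.
have [->|un0] := eqVneq u 0; first by rewrite mulmx0 enorm0 mulr0.
have hu := enorm_gt0 un0.
have := v_longest (enorm_normalize un0).
rewrite /normalize -scalemxAr enormZ ger0_norm ?invr_ge0 ?(ltW hu) // => h.
by rewrite -ler_pdivrMr // mulrC.
Qed.

Lemma root_char_poly_ggT_le (lam : R) :
  root (char_poly (g *m g^T)) lam -> lam <= enorm (g *m v) ^+ 2.
Proof.
rewrite -eigenvalue_root_char => /eigenvalueP [r hr rn0].
set sig := enorm (g *m v); set u := r^T.
have un0 : u != 0 by apply: contraNneq rn0 => h; rewrite -(trmxK r) -/u h trmx0.
have hS : g *m (g^T *m u) = lam *: u.
  by rewrite mulmxA /u -[g *m g^T]trmxK trmx_mul trmxK -trmx_mul hr linearZ.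
set z := g^T *m u.
have hz : dot z z = lam * dot u u by rewrite {1}/z dot_mulmx trmxK hS dotZr.
have hgz : dot (g *m z) (g *m z) = lam ^+ 2 * dot u u.
  by rewrite /z hS dotZl dotZr mulrA -expr2.
have hdu : 0 < dot u u by rewrite -enorm_sqr exprn_gt0 // enorm_gt0.
have : dot (g *m z) (g *m z) <= sig ^+ 2 * dot z z.
  rewrite -!enorm_sqr -exprMn ler_pXn2r ?nnegrE ?mulr_ge0 ?enorm_ge0 //.
  exact: enorm_mulmx_le.
rewrite hgz hz mulrA -subr_ge0 -mulrBl pmulr_lge0 // => h.
have [lam_pos|] := ltP 0 lam; last by have := sqr_ge0 sig; lra.
have : 0 <= (sig ^+ 2 - lam) * lam by nra.
by rewrite pmulr_lge0 // subr_ge0.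
Qed.

Lemma sing_val1_le : sing_val g 1 <= enorm (g *m v).
Proof.
rewrite /sing_val /= -[X in _ <= X]ger0_norm ?enorm_ge0 // -sqrtr_sqr.
apply: ler_wsqrtr; case: (eigs_ggTP g) => [[_ he]|->]; last by rewrite sqr_ge0.
case: (eigs_ggT g) he => [|a s] he /=; first by rewrite sqr_ge0.
by apply: root_char_poly_ggT_le; rewrite he root_prod_XsubC mem_head.
Qed.

Lemma enorm_mulmx_orth_le u : (2 <= d)%N -> sorted_eigs_ggT g (eigs_ggT g) ->
  dot u v = 0 -> enorm (g *m u) ^+ 2 <= d.-1%:R * sing_val g 2 ^+ 2 * enorm u ^+ 2.
Proof.
move=> hd heigs huv.
have [->|un0] := eqVneq u 0; first by rewrite mulmx0 enorm0 expr0n /= mulr0.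
have [sz tr] := sorted_eigs_ggT_trace (ltnW hd) heigs.
have hv : dot v v = 1 by rewrite -enorm_sqr v_unit expr1n.
have hu : dot (normalize u) (normalize u) = 1.
  by rewrite -enorm_sqr enorm_normalize // expr1n.
have huv' : dot (normalize u) v = 0 by rewrite /normalize dotZl huv mulr0.
have := orthonormal_pair_le_mxtrace g hv hu huv'.
have sz2 : (2 <= size (eigs_ggT g))%N by rewrite sz.
move: heigs.1 sz sz2 tr sing_val1_le; rewrite /sing_val /=.
case: (eigs_ggT g) => [|a [|b s]] //= /andP [hab hpath] sz _ -> ha.
rewrite !big_cons /normalize -scalemxAr dotZl dotZr mulrA -expr2 exprVn -!enorm_sqr.
have hsb : \sum_(x <- s) x <= (size s)%:R * b.
  rewrite mulr_natl -iter_addr_0 -count_predT -big_const_seq.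
  rewrite big_seq [X in _ <= X]big_seq; apply: ler_sum => x xs.
  by have /allP := order_path_min (fun _ _ _ h1 h2 => le_trans h2 h1) hpath; apply.
have b_le := ler_sqr_sqrtr b.
have hu2 : 0 < enorm u ^+ 2 by rewrite exprn_gt0 ?enorm_gt0.
have a_le : a <= enorm (g *m v) ^+ 2.
  by rewrite (le_trans (ler_sqr_sqrtr a)) // ler_pXn2r ?nnegrE ?sqrtr_ge0 ?enorm_ge0.
have -> : d.-1 = (size s).+1 by rewrite -sz.
move=> h.
have : enorm (g *m u) ^+ 2 / enorm u ^+ 2 <= (size s).+1%:R * b.
  by rewrite mulrC -natr1; lra.
rewrite ler_pdivrMr // => /le_trans; apply.
by rewrite ler_pM2r //; apply: ler_wpM2l; rewrite ?ler0n.
Qed.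

Lemma orth_contraction u (K : R) : (2 <= d)%N -> 1 <= K -> ln K < mu12 g ->
  dot u v = 0 -> K ^+ 2 * enorm (g *m u) ^+ 2 <= d.-1%:R * enorm (g *m v) ^+ 2 * enorm u ^+ 2.
Proof.
move=> hd hK hmu huv.
have heigs : sorted_eigs_ggT g (eigs_ggT g).
  by apply: mu12_neq0_eigs_ggT; rewrite gt_eqF // (le_lt_trans (ln_ge0 hK)).
have hgap : (K * sing_val g 2) ^+ 2 <= enorm (g *m v) ^+ 2.
  rewrite ler_pXn2r ?nnegrE ?mulr_ge0 ?sqrtr_ge0 ?enorm_ge0 //; last by lra.
  exact: le_trans (mu12_gap hK hmu) sing_val1_le.
apply: le_trans (ler_wpM2l (sqr_ge0 K) (enorm_mulmx_orth_le hd heigs huv)) _.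
have -> : K ^+ 2 * (d.-1%:R * sing_val g 2 ^+ 2 * enorm u ^+ 2) =
    d.-1%:R * (K * sing_val g 2) ^+ 2 * enorm u ^+ 2 by rewrite exprMn; ring.
by apply: ler_wpM2r; [exact: sqr_ge0|apply: ler_wpM2l; rewrite ?ler0n].
Qed.

End LongestAxis.

Lemma orth_contraction_eventually (g : nat -> 'M[R]_d) (v : nat -> vec) :
  (2 <= d)%N -> (forall n, enorm (v n) = 1) ->
  (forall n u, enorm u = 1 -> enorm (g n *m u) <= enorm (g n *m v n)) ->
  (forall M : R, exists N, forall n, (N <= n)%N -> M < mu12 (g n)) ->
  forall eta : R, 0 < eta -> exists N, forall n, (N <= n)%N ->
    forall u, dot u (v n) = 0 -> enorm (g n *m u) <= eta * enorm (g n *m v n) * enorm u.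
Proof.
move=> hd v_unit v_longest hmu eta heta.
set K := d%:R / eta + 1.
have hd1 : 1 <= d%:R :> R by rewrite ler1n ltnW.
have hK1 : 1 <= K by rewrite /K lerDr divr_ge0 // ltW.
have hK0 : 0 < K ^+ 2 by rewrite exprn_gt0 //; lra.
have heK : eta * K = d%:R + eta by rewrite /K mulrDr mulr1 mulrC divfK ?gt_eqF.
have hdK : d.-1%:R <= (eta * K) ^+ 2.
  have : d.-1%:R <= d%:R :> R by rewrite ler_nat leq_pred.
  rewrite heK; nra.
have [N hN] := hmu (ln K).
exists N => n hn u huv.
rewrite -ler_sqr ?nnegrE ?mulr_ge0 ?enorm_ge0 ?(ltW heta) // -(ler_pM2l hK0).
apply: le_trans (orth_contraction (v_unit n) (v_longest n) hd hK1 (hN n hn) huv) _.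
have -> : K ^+ 2 * (eta * enorm (g n *m v n) * enorm u) ^+ 2 =
    (eta * K) ^+ 2 * enorm (g n *m v n) ^+ 2 * enorm u ^+ 2 by rewrite !exprMn; ring.
by apply: ler_wpM2r; [exact: sqr_ge0|apply: ler_wpM2r; [exact: sqr_ge0|]].
Qed.

End SingularValues.

Section Cluster.
Local Open Scope classical_set_scope.
Variables (R : realType) (d : nat).
Local Notation vec := 'cV[R]_d.

Definition cluster_point (f : nat -> vec) (u : vec) : Prop :=
  forall eta : R, 0 < eta -> forall N, exists k, (N <= k)%N /\ enorm (u - f k) < eta.

Lemma unit_seq_cluster (f : nat -> vec) : (forall k, enorm (f k) = 1) ->
  exists2 u, u != 0 & cluster_point f u.
Proof.
move=> f_unit.
pose K := [set v : 'rV[R]_d | forall i, `[(-1 : R), 1] (v ord0 i)].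
have cK : compact K.
  by apply: (@rV_compact _ _ (fun=> `[(-1 : R), 1])) => _; exact: segment_compact.
have FK : ((fun k => (f k)^T) @ \oo) K.
  have fK k : K (f k)^T.
    by move=> i /=; rewrite mxE in_itv /= -ler_norml -(f_unit k) ler_coord_enorm.
  exact: (@filterE nat \oo _ (fun k => K (f k)^T) fK).
have [p [_ clp]] := cK _ _ FK.
have hp : cluster_point f p^T.
  move=> eta heta N; set e := eta / (d%:R + 1).
  have he : 0 < e by apply: divr_gt0 => //; rewrite ltr_wpDl.
  have FA : ((fun k => (f k)^T) @ \oo) [set y | exists k, (N <= k)%N /\ y = (f k)^T].
    by apply: filterS (nbhs_infty_ge N) => k hk; exists k.
  have [y [[k [hk ->]] [_ hb]]] := clp _ _ FA (nbhsx_ballx p e he).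
  exists k; split => //; apply: le_lt_trans (ler_enorm_sum_coord _) _.
  apply: (@le_lt_trans _ _ (\sum_(i < d) e)).
    by apply: ler_sum => i _; have := hb 0 i; rewrite /ball /= !mxE => /ltW.
  rewrite sumr_const card_ord /e -[_ *+ d]mulr_natr mulrAC ltr_pdivrMr ?ltr_wpDl //.
  by rewrite mulrDr mulr1 ltrDl.
exists p^T => //; apply/eqP => p0.
have half_gt0 : 0 < 1 / 2 :> R by lra.
have [k [_]] := hp _ half_gt0 0%N.
by rewrite p0 sub0r enormN f_unit; lra.
Qed.

End Cluster.

Section ConvexCone.
Variables (R : realType) (d : nat).
Local Notation vec := 'cV[R]_d.
Implicit Types u v c : vec.
Variable C : set vec.
Hypothesis notC0 : ~ C 0.
Hypothesis convC : convex_set C.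

Lemma closure_set_id c : C c -> closure_set C c.
Proof. by move=> hc eps he; exists c; rewrite subrr enorm0. Qed.

Lemma cone_neq0 c : C c -> c != 0.
Proof. by move=> hc; apply: contra_notN notC0 => /eqP <-. Qed.

(* A linear form that does not vanish on the convex set C has constant sign on
   it: otherwise it vanishes at a convex combination of two points of C. *)
Lemma convex_dot_same_sign al : (forall c, C c -> dot al c != 0) ->
  forall c c', C c -> C c' -> 0 < dot al c * dot al c'.
Proof.
move=> al_neq0 c c' hc hc'; have hB := al_neq0 _ hc; have hA := al_neq0 _ hc'.
rewrite lt_neqAle eq_sym (mulf_neq0 hB hA) /= leNgt; apply/negP => hneg.
set A := dot al c' in hA hneg; set B := dot al c in hB hneg.
have hD : A - B != 0.
  apply: contraTneq hneg => /eqP; rewrite subr_eq0 => /eqP ->.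
  by rewrite -leNgt mulrC -expr2 sqr_ge0.
have hD2 : 0 < (A - B) ^+ 2 by rewrite lt_neqAle eq_sym sqrf_eq0 hD sqr_ge0.
set t := A / (A - B).
have ht0 : 0 <= t.
  rewrite (_ : t = (A ^+ 2 - A * B) / (A - B) ^+ 2); last by rewrite /t; field.
  by rewrite divr_ge0 ?(ltW hD2) //; nra.
have ht1 : t <= 1.
  rewrite -subr_ge0 (_ : 1 - t = (B ^+ 2 - A * B) / (A - B) ^+ 2); last by rewrite /t; field.
  by rewrite divr_ge0 ?(ltW hD2) //; nra.
have := al_neq0 _ (convC hc hc' ht0 ht1).
by rewrite dotDr !dotZr -/A -/B /t; apply/negP; rewrite negbK; apply/eqP; field.
Qed.

Lemma cone_dual_functional (a : 'rV[R]_d) : (exists c, C c) ->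
  (forall v, closure_set C v -> v != 0 -> (a *m v) 0 0 != 0) ->
  exists2 al, (forall c, C c -> 0 < dot al c) &
    (forall v, closure_set C v -> v != 0 -> dot al v != 0).
Proof.
move=> [c0 hc0] ha.
have dot_a v : (a *m v) 0 0 = dot a^T v.
  by rewrite mxE; apply: eq_bigr => i _; rewrite mxE.
have a_neq0 v : closure_set C v -> v != 0 -> dot a^T v != 0.
  by rewrite -dot_a; apply: ha.
have a_C c : C c -> dot a^T c != 0.
  by move=> hc; apply: a_neq0 (closure_set_id hc) (cone_neq0 hc).
(* orient a by its sign at c0 *)
exists (dot a^T c0 *: a^T) => [c hc|v hv vn0]; rewrite dotZl.
  exact (convex_dot_same_sign a_C hc0 hc).
by apply: mulf_neq0; [exact: a_C|exact: a_neq0].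
Qed.

Variable al : vec.
Hypothesis al_pos : forall c, C c -> 0 < dot al c.
Hypothesis al_closure : forall v, closure_set C v -> v != 0 -> dot al v != 0.

Lemma dot_closure_ge0 v : closure_set C v -> 0 <= dot al v.
Proof.
move=> hv; rewrite leNgt; apply/negP => hlt.
have hal := enorm_ge0 al.
set eps := - dot al v / (enorm al + 1).
have he : 0 < eps by apply: divr_gt0; lra.
have [w [hw hd]] := hv eps he.
have e : dot al w = dot al v + dot al (w - v) by rewrite dotBr addrC subrK.
have h1 : dot al (w - v) <= enorm al * eps.
  apply: le_trans (ler_norm _) (le_trans (cauchy_schwarz _ _) _).
  by apply: ler_wpM2l => //; apply: ltW.
have h2 : (enorm al + 1) * eps = - dot al v by rewrite /eps mulrC divfK //; lra.
have := al_pos hw; nra.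
Qed.

Lemma closure_set_cluster (f c : nat -> vec) u :
  (forall k, C (c k)) -> (forall k, enorm (c k - f k) < k.+1%:R^-1) ->
  cluster_point f u -> closure_set C u.
Proof.
move=> hc hcf hu eps he.
have he2 : 0 < eps / 2 by apply: divr_gt0.
have [N _ hN] := near_infty_natSinv_lt (PosNum he2).
have [k [hk hfk]] := hu _ he2 N.
exists (c k); split => //.
have -> : c k - u = (c k - f k) - (u - f k) by rewrite opprB addrA subrK.
apply: le_lt_trans (ler_enormB _ _) _.
have := lt_trans (hcf k) (hN k hk); rewrite /=; lra.
Qed.

Definition antipodal_gap (del : R) : Prop := forall u c1 c2, enorm u = 1 ->
  C c1 -> C c2 -> enorm (c1 - u) < del -> enorm (c2 + u) < del -> False.

(* If C contained points arbitrarily close to u_k and to - u_k, a cluster point u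
   of (u_k) and - u would both lie in the closure of C, so dot al u = 0. *)
Lemma cone_antipodal_gap : exists2 del, 0 < del & antipodal_gap del.
Proof.
apply: contrapT => no_gap.
have H k : exists t : vec * vec * vec, [/\ enorm t.1.1 = 1, C t.1.2, C t.2,
    enorm (t.1.2 - t.1.1) < k.+1%:R^-1 & enorm (t.2 + t.1.1) < k.+1%:R^-1].
  apply: contrapT => hk; apply: no_gap; exists k.+1%:R^-1 => [|u c1 c2 *].
    by rewrite invr_gt0.
  by apply: hk; exists (u, c1, c2).
have [t ht] := choice H.
have t_unit k : enorm (t k).1.1 = 1 by case: (ht k).
have [u un0 hu] := unit_seq_cluster (f := fun k => (t k).1.1) t_unit.
have cl_u : closure_set C u.
  by apply: (closure_set_cluster (c := fun k => (t k).1.2) _ _ hu) => k; case: (ht k).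
have cl_Nu : closure_set C (- u).
  apply: (closure_set_cluster (f := fun k => - (t k).1.1) (c := fun k => (t k).2)).
  - by move=> k; case: (ht k).
  - by move=> k; case: (ht k) => _ _ _ _; rewrite opprK.
  - move=> eta heta N; have [k hk] := hu eta heta N.
    by exists k; rewrite opprK addrC -opprB enormN.
have := dot_closure_ge0 cl_Nu; rewrite dotNr oppr_ge0 => le0.
by have := al_closure cl_u un0; rewrite eq_le le0 dot_closure_ge0.
Qed.

End ConvexCone.

Section PreservedCone.
Variables (R : realType) (d : nat).
Local Notation vec := 'cV[R]_d.

Definition preserves_up_to_sign (C : set vec) (g : 'M[R]_d) : Prop :=
  forall y y', C y -> C y' ->
    exists2 s : R, `|s| = 1 & C (s *: (g *m y)) /\ C (s *: (g *m y')).

Variables (C : set vec) (al : vec).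
Hypothesis notC0 : ~ C 0.
Hypothesis convC : convex_set C.
Hypothesis coneC : cone_set C.
Hypothesis al_pos : forall c, C c -> 0 < dot al c.
Variable g : 'M[R]_d.
Hypothesis gC : preserves C g.

Lemma preserves_line z : C z -> exists2 t : R, t != 0 & C (t *: (g *m z)).
Proof.
move=> hz; have [|t [tn0 ht]] := (gC (cone_neq0 notC0 hz)).2; last by exists t.
by exists 1; rewrite scale1r oner_neq0.
Qed.

Lemma dot_image_neq0 z : C z -> dot al (g *m z) != 0.
Proof.
move=> /preserves_line [t tn0 /al_pos]; rewrite dotZr.
by apply: contraTneq => ->; rewrite mulr0 ltxx.
Qed.

Lemma scale_image_in_cone z (s : R) : C z -> 0 < s * dot al (g *m z) -> C (s *: (g *m z)).
Proof.
move=> hz hs; have [t tn0 ht] := preserves_line hz.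
have := al_pos ht; rewrite dotZr => htF.
have Fn0 := dot_image_neq0 hz.
have hst : 0 < s / t.
  rewrite (_ : s / t = (s * dot al (g *m z)) / (t * dot al (g *m z))) ?divr_gt0 //.
  by field; rewrite Fn0 tn0.
by have := coneC ht hst; rewrite scalerA divfK.
Qed.

Lemma preserves_up_to_signP : preserves_up_to_sign C g.
Proof.
move=> y y' hy hy'.
have dot_image z : dot al (g *m z) = dot (g^T *m al) z by rewrite dotC dot_mulmx dotC.
have same_sign : 0 < dot al (g *m y) * dot al (g *m y').
  rewrite !dot_image; apply: (convex_dot_same_sign convC) => // c hc.
  by rewrite -dot_image dot_image_neq0.
have [pos|neg] := ltP 0 (dot al (g *m y)).
  exists 1; rewrite ?normr1 //; split; apply: scale_image_in_cone; rewrite ?mul1r //.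
  by rewrite -(pmulr_rgt0 _ pos).
have neg' : dot al (g *m y) < 0 by rewrite lt_neqAle dot_image_neq0.
exists (-1); rewrite ?normrN ?normr1 //.
split; apply: scale_image_in_cone; rewrite ?mulN1r ?oppr_gt0 //.
by rewrite -(nmulr_rgt0 _ neg').
Qed.

End PreservedCone.

Section ImageNearAxis.
Variables (R : realType) (d : nat).
Local Notation vec := 'cV[R]_d.
Variables (C : set vec) (g : 'M[R]_d) (v x : vec) (eta del r : R).
Hypothesis coneC : cone_set C.
Hypothesis g_sign : preserves_up_to_sign C g.
Hypothesis v_unit : enorm v = 1.
Hypothesis gv_pos : 0 < enorm (g *m v).
Hypothesis eta_pos : 0 < eta.
Hypothesis g_contracts :
  forall u, dot u v = 0 -> enorm (g *m u) <= eta * enorm (g *m v) * enorm u.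
Hypothesis gap : antipodal_gap C del.
Hypothesis r_pos : 0 < r.
Hypothesis ball_x : forall w, enorm (w - x) < r -> C w.
Hypothesis eta_small : 8 * eta * enorm x < del * r.

Local Notation p := (dot x v).
Local Notation x' := (x - p *: v).
Local Notation sg := (enorm (g *m v)).

Lemma image_orth_part_le : enorm (g *m x') <= 2 * eta * sg * enorm x.
Proof.
have x'_orth : dot x' v = 0 by rewrite dotBl dotZl -enorm_sqr v_unit expr1n mulr1 subrr.
have p_le : `|p| <= enorm x by have := cauchy_schwarz x v; rewrite v_unit mulr1.
have x'_le : enorm x' <= 2 * enorm x.
  by apply: le_trans (ler_enormB _ _) _; rewrite enormZ v_unit mulr1 mulr_natl mulr2n lerD2l.
apply: le_trans (g_contracts x'_orth) _.
have := ler_wpM2l (mulr_ge0 (ltW eta_pos) (enorm_ge0 (g *m v))) x'_le; lra.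
Qed.

Lemma image_decomp (q : R) : g *m (x + q *: v) = (p + q) *: (g *m v) + g *m x'.
Proof.
rewrite scalemxAr -mulmxDr; congr (g *m _).
by apply/matrixP => i j; rewrite !mxE; ring.
Qed.

Lemma rescaled_image_near_axis (q s : R) : `|s| = 1 -> r / 4 < `|p + q| ->
  enorm (((p + q) * sg)^-1 *: (s *: (g *m (x + q *: v))) - (s / sg) *: (g *m v)) < del.
Proof.
move=> s_unit hpq; have r_gt0 := r_pos; have r4_gt0 : 0 < r / 4 by lra.
have pq_neq0 : p + q != 0 by rewrite -normr_gt0 (lt_trans r4_gt0 hpq).
rewrite image_decomp.
have -> : ((p + q) * sg)^-1 *: (s *: ((p + q) *: (g *m v) + g *m x')) - (s / sg) *: (g *m v)
    = (((p + q) * sg)^-1 * s) *: (g *m x').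
  by apply/matrixP => i j; rewrite !mxE; field; rewrite pq_neq0 gt_eqF.
rewrite enormZ normrM s_unit mulr1 normfV normrM (gtr0_norm gv_pos).
rewrite mulrC ltr_pdivrMr ?mulr_gt0 ?(lt_trans r4_gt0 hpq) //.
apply: le_lt_trans image_orth_part_le _.
have := eta_small; have := mulr_ge0 (ltW eta_pos) (enorm_ge0 x) => ex_ge0 small.
have del_gt0 : 0 < del by nra.
have : del * (r / 4) < del * `|p + q| by rewrite ltr_pM2l.
have := gv_pos; nra.
Qed.

(* If the coordinate of x along v were small, x + (r/2) v and x - (r/2) v would
   be points of C whose images point to g v and - g v up to a common sign. *)
Lemma axis_coord_ge : r / 4 <= `|p|.
Proof.
have r_gt0 := r_pos.
rewrite leNgt; apply/negP; rewrite ltr_norml => /andP [hp1 hp2].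
set s := r / 2.
have hy1 : C (x + s *: v).
  by apply: ball_x; rewrite addrAC subrr add0r enormZ v_unit mulr1 ger0_norm /s; lra.
have hy2 : C (x + (- s) *: v).
  by apply: ball_x; rewrite addrAC subrr add0r enormZ v_unit mulr1 normrN ger0_norm /s; lra.
have [sn sn_unit [hc1 hc2]] := g_sign hy1 hy2.
apply: (gap (u := (sn / sg) *: (g *m v))
  (c1 := ((p + s) * sg)^-1 *: (sn *: (g *m (x + s *: v))))
  (c2 := - ((p + - s) * sg)^-1 *: (sn *: (g *m (x + (- s) *: v))))).
- by rewrite enormZ normrM sn_unit mul1r normfV (gtr0_norm gv_pos) mulVf ?gt_eqF.
- by apply: coneC hc1 _; rewrite invr_gt0 mulr_gt0 // /s; lra.
- by apply: coneC hc2 _; rewrite -invrN -mulNr invr_gt0 mulr_gt0 // /s; lra.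
- by apply: rescaled_image_near_axis; rewrite // gtr0_norm /s; lra.
rewrite scaleNr addrC -opprB enormN; apply: rescaled_image_near_axis => //.
by rewrite ltr0_norm /s; lra.
Qed.

Lemma pdist_image_axis_le : pdist (g *m x) (g *m v) <= 16 * eta * enorm x / r.
Proof.
have r_gt0 := r_pos; have r4_gt0 : 0 < r / 4 by lra.
have hp := axis_coord_ge; have p_gt0 := lt_le_trans r4_gt0 hp.
have p_neq0 : p != 0 by rewrite -normr_gt0.
have gv_neq0 : g *m v != 0 by apply: contraTneq gv_pos => ->; rewrite enorm0 ltxx.
have pgv_neq0 : p *: (g *m v) != 0 by rewrite scaler_eq0 negb_or p_neq0 gv_neq0.
have gx : g *m x - p *: (g *m v) = g *m x'.
  by have := image_decomp 0; rewrite scale0r !addr0 => ->; rewrite addrAC subrr add0r.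
have := enorm_normalizeB (g *m x) pgv_neq0.
rewrite gx enormZ normalizeZ // => hb.
have hbd : 2 * enorm (g *m x') / (`|p| * sg) <= 16 * eta * enorm x / r.
  rewrite ler_pdivrMr ?mulr_gt0 // mulrAC ler_pdivlMr //.
  have := image_orth_part_le; have := mulr_ge0 (ltW eta_pos) (enorm_ge0 x).
  move=> h0 hx'; have h4 : r <= 4 * `|p| by lra.
  have := ler_wpM2l (mulr_ge0 h0 (ltW gv_pos)) h4; nra.
have [p_pos|p_le0] := ltP 0 p.
  rewrite (gtr0_norm p_pos) in hb hbd; rewrite divff // scale1r in hb.
  exact: le_trans (pdist_le_normalizeB _ _) (le_trans hb hbd).
have p_lt0 : p < 0 by rewrite lt_neqAle p_neq0.
rewrite (ltr0_norm p_lt0) in hb hbd; rewrite invrN mulrN divff // scaleN1r opprK in hb.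
exact: le_trans (pdist_le_normalizeD _ _) (le_trans hb hbd).
Qed.

End ImageNearAxis.

Section Orbit.
Variables (R : realType) (d : nat).
Local Notation vec := 'cV[R]_d.

Definition pdist_vanish (a b : nat -> vec) : Prop := forall eps : R, 0 < eps ->
  exists N, forall n, (N <= n)%N -> pdist (a n) (b n) < eps.

Lemma pdist_vanishC a b : pdist_vanish a b -> pdist_vanish b a.
Proof.
move=> hab eps /hab [N hN]; exists N => n /hN.
by rewrite pdistC.
Qed.

Lemma proj_accum_pdist_vanish a b u :
  pdist_vanish a b -> proj_accum a u -> proj_accum b u.
Proof.
move=> hab [un0 hacc]; split => // eps heps N.
have heps2 : 0 < eps / 2 by apply: divr_gt0.
have [N1 hN1] := hab _ heps2.
have [n [hn hau]] := hacc _ heps2 (maxn N N1).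
exists n; split; first exact: leq_trans (leq_maxl _ _) hn.
have hab_n := hN1 n (leq_trans (leq_maxr _ _) hn).
have := pdist_triangle (b n) (a n) u; rewrite pdistC in hab_n; lra.
Qed.

Lemma orbit_axis_pdist_vanish (C : set vec) (g : nat -> 'M[R]_d) (v : nat -> vec) x :
  (2 <= d)%N -> cone_set C -> (forall n, preserves_up_to_sign C (g n)) ->
  (exists2 del, 0 < del & antipodal_gap C del) ->
  (exists r : R, 0 < r /\ forall w, enorm (w - x) < r -> C w) ->
  (forall n, enorm (v n) = 1) -> (forall n, 0 < enorm (g n *m v n)) ->
  (forall n u, enorm u = 1 -> enorm (g n *m u) <= enorm (g n *m v n)) ->
  (forall M : R, exists N, forall n, (N <= n)%N -> M < mu12 (g n)) ->
  pdist_vanish (fun n => g n *m x) (fun n => g n *m v n).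
Proof.
move=> hd coneC g_sign [del del_pos gap] [r [r_pos ball_x]] v_unit gv_pos v_longest hmu.
move=> eps eps_pos.
set m := Num.min del eps.
have m_pos : 0 < m by rewrite lt_min del_pos eps_pos.
have m_del : m <= del by rewrite ge_min lexx.
have m_eps : m <= eps by rewrite ge_min lexx orbT.
have x_ge0 := enorm_ge0 x.
(* 16 is the constant of pdist_image_axis_le; m <= del gives its smallness hypothesis *)
set eta := m * r / (16 * (enorm x + 1)).
have eta_pos : 0 < eta by rewrite divr_gt0 ?mulr_gt0 //; lra.
have eta_x : 16 * eta * enorm x < m * r.
  have e : eta * (16 * (enorm x + 1)) = m * r by rewrite /eta divfK //; lra.
  have := mulr_gt0 m_pos r_pos; nra.
have [N hN] := orth_contraction_eventually hd v_unit v_longest hmu eta_pos.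
exists N => n hn.
have eta_small : 8 * eta * enorm x < del * r.
  have := mulr_ge0 (ltW eta_pos) x_ge0; have := ler_wpM2r (ltW r_pos) m_del; lra.
apply: le_lt_trans (pdist_image_axis_le coneC (g_sign n) (v_unit n) (gv_pos n)
  eta_pos (hN n hn) gap r_pos ball_x eta_small) _.
rewrite ltr_pdivrMr //; have := ler_wpM2r (ltW r_pos) m_eps; lra.
Qed.

End Orbit.

Theorem lemma7p1 (R : realType) (d : nat) (hd : (2 <= d)%N)
  (C : set 'cV[R]_d) (g : nat -> 'M[R]_d)
  (hC : properly_convex_cone C)
  (hSL : forall n, in_SLpm (g n))
  (hpres : forall n, preserves C (g n))
  (hmu : forall M : R, exists N : nat, forall n, (N <= n)%N -> M < mu12 (g n))
  (w : nat -> 'cV[R]_d) (hw : forall n, longest_axis (g n) (w n))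
  (x : 'cV[R]_d) (hx : C x) :
  forall u : 'cV[R]_d,
    proj_accum (fun n => g n *m x) u <-> proj_accum w u.
Proof.
case: hC => [[hne notC0] hopen convC coneC [a ha]].
have [al al_pos al_closure] := cone_dual_functional notC0 convC hne ha.
have g_sign n := preserves_up_to_signP notC0 convC coneC al_pos (hpres n).
have [v hv] := choice hw.
have v_unit n : enorm (v n) = 1 by case: (hv n).
have v_longest n : forall u, enorm u = 1 -> enorm (g n *m u) <= enorm (g n *m v n).
  by case: (hv n) => _ [].
have -> : w = fun n => g n *m v n by apply: funext => n; case: (hv n) => _ [].
have gv_pos n : 0 < enorm (g n *m v n).
  by rewrite enorm_gt0 // mulmx_unit_neq0 ?in_SLpm_unitmx ?enorm1_neq0.
have hvan := orbit_axis_pdist_vanish hd coneC g_sign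
  (cone_antipodal_gap al_pos al_closure) (hopen x hx) v_unit gv_pos v_longest hmu.
by move=> u; split; apply: proj_accum_pdist_vanish; last exact: pdist_vanishC.
Qed.
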